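(* Let $N\geq1$ and let $|\psi_N\rangle=\sum_{k=1}^{D}|x_k\rangle^{\otimes N}\in\mathrm{Sym}_N$ with $|x_k\rangle\in\mathbb{C}^2$, where $D=D(\psi_N)$ is the optimal bond dimension of $|\psi_N\rangle$, and assume $D(\psi_N)\leq\lfloor N/2\rfloor+1$. Then the $(N+1)$-qubit state $|\psi_{N+1}\rangle=\sum_{k=1}^{D}|x_k\rangle^{\otimes(N+1)}$ is nonzero and has optimal bond dimension $D(\psi_{N+1})=D(\psi_N)$.
   Context: The one-qubit space is $\mathbb{C}^2$ with standard basis $\{|0\rangle,|1\rangle\}$. For $N\geq1$, $\mathrm{Sym}_N\subset(\mathbb{C}^2)^{\otimes N}$ denotes the symmetric subspace, i.e. the vectors invariant under every permutation of the $N$ tensor factors; it has dimension $N+1$. For a nonzero $|\psi\rangle\in\mathrm{Sym}_N$, the optimal bond dimension $D(\psi)$ is the minimal integer $D\geq1$ such that $|\psi\rangle=\sum_{k=1}^D|x_k\rangle^{\otimes N}$ for some (not necessarily normalized) vectors $|x_k\rangle\in\mathbb{C}^2$. *)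

(* Scalars: any numClosedFieldType F (the complex numbers are one). *)
From HB Require Import structures.
From mathcomp Require Import all_boot all_order all_algebra all_fingroup.
Set Implicit Arguments. Unset Strict Implicit. Unset Printing Implicit Defensive.
Import GRing.Theory Num.Theory.
Local Open Scope ring_scope.

(* (F^2)^{(x) N}: coefficient functions on basis strings s : 'I_N -> 'I_2. *)
Definition tensor (F : Type) (N : nat) := {ffun {ffun 'I_N -> 'I_2} -> F}.

Notation qubit F := 'cV[F]_2.

Definition tpow (F : numClosedFieldType) (x : qubit F) (N : nat) : tensor F N :=
  [ffun s : {ffun 'I_N -> 'I_2} => \prod_(i < N) x (s i) ord0].

Definition tsum (F : numClosedFieldType) (D : nat) (xs : 'I_D -> qubit F) (N : nat)
  : tensor F N := \sum_(k < D) tpow (xs k) N.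

Definition tperm_act (F : Type) (N : nat) (sigma : 'S_N) (t : tensor F N) : tensor F N :=
  [ffun s : {ffun 'I_N -> 'I_2} => t [ffun i => s (sigma i)]].

Definition in_Sym (F : Type) (N : nat) (t : tensor F N) : Prop :=
  forall sigma : 'S_N, tperm_act sigma t = t.

Definition has_decomp (F : numClosedFieldType) (N : nat) (psi : tensor F N) (D : nat)
  : Prop := exists xs : 'I_D -> qubit F, psi = tsum xs N.

Definition optimal_bond_dim (F : numClosedFieldType) (N : nat) (psi : tensor F N) (D : nat)
  : Prop :=
  (1 <= D)%N /\ has_decomp psi D /\
  forall D', (1 <= D')%N -> has_decomp psi D' -> (D <= D')%N.

(** Contracting the first tensor factor against the covector that kills a
    vector [z] sends [x^(n+1)] to [cross z x * x^n].  Killing the vectors one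
    at a time shows that the [n]-th powers of [m] nonzero, pairwise
    non-collinear vectors are linearly independent when [m <= n + 1].  In an
    optimal decomposition the [x_k] are nonzero and pairwise non-collinear,
    since two collinear powers merge into one (taking an [N]-th root).  If
    [sum_k x_k^(M) = sum_j y_j^(M)] with [D - 1 + D' <= M], contracting away
    the [D'] vectors [y_j] leaves a vanishing combination of the independent
    powers [x_k^(M - D')] with coefficients [prod_j cross y_j x_k]; hence each
    [x_k] is collinear to some [y_j], distinct [k] to distinct [j], and
    [D <= D'].  For [D' < D <= N/2 + 1] the condition [D - 1 + D' <= N + 1]
    holds. *)

From HB Require Import structures.
From mathcomp Require Import all_boot all_order all_algebra all_fingroup.
From mathcomp Require Import ring zify.
Set Implicit Arguments. Unset Strict Implicit. Unset Printing Implicit Defensive.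
Import GRing.Theory Num.Theory.
Local Open Scope ring_scope.

Lemma leq_card_of_rel (T T' : finType) (R : T -> T' -> bool) :
  (forall x, exists y, R x y) -> (forall x x' y, R x y -> R x' y -> x = x') ->
  (#|T| <= #|T'|)%N.
Proof.
move=> hR R_inj; pose f x := xchoose (hR x).
have Rf x : R x (f x) by exact: xchooseP.
apply: (@leq_card _ _ f) => x x' efx; apply: (R_inj _ _ (f x)) => //.
by rewrite efx.
Qed.

Section QubitPowers.
Variable F : numClosedFieldType.
Implicit Types (x y z : qubit F) (c : F).

Lemma ord2_cases (i : 'I_2) : i = ord0 \/ i = ord_max.
Proof. by case: i => [[|[|//]] ?]; [left | right]; apply: val_inj. Qed.

Lemma qubitP x y :
  x ord0 ord0 = y ord0 ord0 -> x ord_max ord0 = y ord_max ord0 -> x = y.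
Proof.
by move=> h0 h1; apply/matrixP => i j; rewrite (ord1 j); case: (ord2_cases i) => ->.
Qed.

Lemma qubit_coord_neq0 x : x != 0 -> exists b, x b ord0 != 0.
Proof.
move=> nz_x; case: (eqVneq (x ord0 ord0) 0) => h0; last by exists ord0.
case: (eqVneq (x ord_max ord0) 0) => h1; last by exists ord_max.
by rewrite (@qubitP x 0) ?mxE ?eqxx in nz_x.
Qed.

(* [cross z y] pairs [y] with the covector [(z_1, -z_0)] annihilating [z]. *)
Definition cross z y := z ord_max ord0 * y ord0 ord0 - z ord0 ord0 * y ord_max ord0.

Lemma crossxx x : cross x x = 0.
Proof. by rewrite /cross mulrC subrr. Qed.

Lemma cross_eq0_scale x y : x != 0 -> cross x y = 0 -> exists c, y = c *: x.
Proof.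
move=> nz_x /eqP; rewrite subr_eq0 => /eqP hxy.
have [b nz_xb] := qubit_coord_neq0 nz_x.
have prop i : y i ord0 * x b ord0 = y b ord0 * x i ord0.
  case: (ord2_cases i) => ->; case: (ord2_cases b) => -> //.
    by rewrite mulrC hxy mulrC.
  by rewrite mulrC -hxy mulrC.
exists (y b ord0 / x b ord0); apply/matrixP => i j; rewrite (ord1 j) mxE.
by rewrite mulrAC -prop mulfK.
Qed.

Lemma cross_trans y a b : y != 0 -> cross y a = 0 -> cross y b = 0 -> cross a b = 0.
Proof.
move=> nz_y /(cross_eq0_scale nz_y) [c ->] /(cross_eq0_scale nz_y) [d ->].
by rewrite /cross !mxE; ring.
Qed.

Definition nzdir y : qubit F := if y == 0 then const_mx 1 else y.

Lemma nzdir_neq0 y : nzdir y != 0.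
Proof.
rewrite /nzdir; case: (eqVneq y 0) => // _.
by apply/negP => /eqP /matrixP /(_ ord0 ord0) /eqP; rewrite !mxE oner_eq0.
Qed.

Lemma cross_nzdir y : cross (nzdir y) y = 0.
Proof. by rewrite /nzdir; case: (eqVneq y 0) => [->|_]; rewrite /cross ?mxE; ring. Qed.

Definition scons n (b : 'I_2) (s : {ffun 'I_n -> 'I_2}) : {ffun 'I_n.+1 -> 'I_2} :=
  [ffun i => if unlift ord0 i is Some j then s j else b].

Lemma tpow_scons x n b s : tpow x n.+1 (scons b s) = x b ord0 * tpow x n s.
Proof.
rewrite !ffunE big_ord_recl ffunE unlift_none; congr (_ * _).
by apply: eq_bigr => i _; rewrite ffunE liftK.
Qed.

Lemma tpow_neq0 x n : x != 0 -> exists s, tpow x n s != 0.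
Proof.
move=> /qubit_coord_neq0 [b nz_xb]; exists [ffun _ => b].
rewrite ffunE (eq_bigr (fun _ => x b ord0)) => [|i _]; last by rewrite ffunE.
by rewrite prodr_const expf_neq0.
Qed.

Lemma tpow0 n : (0 < n)%N -> tpow (0 : qubit F) n = 0.
Proof. by case: n => // n _; apply/ffunP => s; rewrite !ffunE big_ord_recl mxE mul0r. Qed.

Lemma tpowZ c x n s : tpow (c *: x) n s = c ^+ n * tpow x n s.
Proof.
rewrite !ffunE (eq_bigr (fun i => c * x (s i) ord0)) => [|i _]; last by rewrite mxE.
by rewrite big_split prodr_const card_ord.
Qed.

Definition wsum D (c : 'I_D -> F) (xs : 'I_D -> qubit F) n : tensor F n :=
  [ffun s => \sum_(k < D) c k * tpow (xs k) n s].

Lemma wsum1 D (xs : 'I_D -> qubit F) n : wsum (fun _ => 1) xs n = tsum xs n.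
Proof.
by apply/ffunP => s; rewrite ffunE sum_ffunE; apply: eq_bigr => k _; rewrite mul1r.
Qed.

Lemma eq_wsum D (c c' : 'I_D -> F) xs n : c =1 c' -> wsum c xs n = wsum c' xs n.
Proof. by move=> ec; apply/ffunP => s; rewrite !ffunE; apply: eq_bigr => k _; rewrite ec. Qed.

Lemma wsum_lift_ord0 D (c : 'I_D.+1 -> F) xs n : c ord0 = 0 ->
  wsum c xs n = wsum (fun j => c (lift ord0 j)) (fun j => xs (lift ord0 j)) n.
Proof. by move=> c0; apply/ffunP => s; rewrite !ffunE big_ord_recl c0 mul0r add0r. Qed.

Lemma wsum_eq0_single D (c : 'I_D -> F) xs n k0 :
  (forall k, k != k0 -> c k = 0) -> xs k0 != 0 -> wsum c xs n = 0 -> c k0 = 0.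
Proof.
move=> c_supp nz_x0 /ffunP hw; have [s nz_s] := tpow_neq0 n nz_x0.
move: (hw s); rewrite !ffunE (bigD1 k0) //= big1 => [|k /c_supp ->]; last by rewrite mul0r.
by rewrite addr0 => /eqP; rewrite mulf_eq0 (negbTE nz_s) orbF => /eqP.
Qed.

Definition contract n z (t : tensor F n.+1) : tensor F n :=
  [ffun s => z ord_max ord0 * t (scons ord0 s) - z ord0 ord0 * t (scons ord_max s)].

Lemma contract0 n z : contract z (0 : tensor F n.+1) = 0.
Proof. by apply/ffunP => s; rewrite !ffunE !mulr0 subr0. Qed.

Lemma contract_wsum D (c : 'I_D -> F) xs n z :
  contract z (wsum c xs n.+1) = wsum (fun k => c k * cross z (xs k)) xs n.
Proof.
apply/ffunP => s.
rewrite ffunE !(@ffunE _ _ (fun s => \sum_(k < D) _ * tpow _ _ s)).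
rewrite !mulr_sumr -sumrB; apply: eq_bigr => k _.
by rewrite !tpow_scons /cross; ring.
Qed.

Lemma tpow_free m n (xs : 'I_m.+1 -> qubit F) (c : 'I_m.+1 -> F) :
  (m <= n)%N -> (forall k, xs k != 0) ->
  (forall k k', k != k' -> cross (xs k) (xs k') != 0) ->
  wsum c xs n = 0 -> forall k, c k = 0.
Proof.
elim: m n xs c => [|m IH] n xs c le_mn nz_xs ncol hw.
  move=> k; rewrite (ord1 k); apply: (wsum_eq0_single _ _ hw) => // k'.
  by rewrite (ord1 k') eqxx.
case: n le_mn hw => [//|n] le_mn hw.
have c_lift j : c (lift ord0 j) = 0.
  have hw' := congr1 (contract (xs ord0)) hw.
  rewrite contract0 contract_wsum wsum_lift_ord0 ?crossxx ?mulr0 // in hw'.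
  have ncol' k k' : k != k' -> cross (xs (lift ord0 k)) (xs (lift ord0 k')) != 0.
    by move=> neq_kk'; apply: ncol; rewrite (inj_eq lift_inj).
  move: (IH n _ _ le_mn (fun k => nz_xs _) ncol' hw' j) => /eqP.
  by rewrite mulf_eq0 (negbTE (ncol _ _ (neq_lift _ _))) orbF => /eqP.
move=> k; case: (unliftP ord0 k) => [j ->|->]; first exact: c_lift.
apply: (wsum_eq0_single _ _ hw) => // k'.
by case: (unliftP ord0 k') => [j -> _|->]; [exact: c_lift | rewrite eqxx].
Qed.

Lemma wsum_contract_all n p D (c : 'I_D -> F) xs (d : 'I_p -> F) ys zs :
  (forall j, cross (zs j) (ys j) = 0) ->
  wsum c xs (n + p) = wsum d ys (n + p) ->
  wsum (fun k => c k * \prod_(j < p) cross (zs j) (xs k)) xs n = 0.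
Proof.
elim: p c d ys zs => [|p IH] c d ys zs zs_ys.
  rewrite addn0 (@eq_wsum _ _ c) => [->|k]; last by rewrite big_ord0 mulr1.
  by apply/ffunP => s; rewrite !ffunE big_ord0.
rewrite addnS => /(congr1 (contract (zs ord0))).
rewrite !contract_wsum [RHS]wsum_lift_ord0 ?zs_ys ?mulr0 // => h.
rewrite -(IH _ _ _ (fun j => zs (lift ord0 j)) (fun j => zs_ys _) h).
by apply: eq_wsum => k; rewrite big_ord_recl mulrA.
Qed.

Lemma decomp_length_lb M D D' (xs : 'I_D -> qubit F) (ys : 'I_D' -> qubit F) :
  (forall k, xs k != 0) -> (forall k k', k != k' -> cross (xs k) (xs k') != 0) ->
  (D.-1 + D' <= M)%N -> tsum xs M = tsum ys M -> (D <= D')%N.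
Proof.
case: D xs => [//|m] xs nz_xs ncol le_M.
rewrite -!wsum1 (_ : M = M - D' + D')%N; last by lia.
move=> /(wsum_contract_all (fun j => cross_nzdir (ys j))) hw.
have le_deg : (m <= M - D')%N by lia.
have coll k : exists j, cross (nzdir (ys j)) (xs k) == 0.
  have /eqP := tpow_free le_deg nz_xs ncol hw k.
  by rewrite mul1r => /prodf_eq0 [j _ coll]; exists j.
rewrite -[m.+1]card_ord -[D' in (_ <= D')%N]card_ord.
apply: (leq_card_of_rel coll) => k k' j /eqP coll_k /eqP coll_k'.
apply/eqP; apply: contraT => neq_kk'.
by have := ncol _ _ neq_kk'; rewrite (cross_trans (nzdir_neq0 _) coll_k coll_k') eqxx.
Qed.

Lemma tsum_drop0 N D (xs : 'I_D.+1 -> qubit F) k : (0 < N)%N -> xs k = 0 ->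
  tsum xs N = tsum (fun j => xs (lift k j)) N.
Proof. by move=> N_gt0 xk0; rewrite /tsum (bigD1_ord k) //= xk0 tpow0 // add0r. Qed.

(* Over an algebraically closed field, [x^(N) + (c x)^(N) = (r x)^(N)]
   with [r] an [N]-th root of [1 + c^N]. *)
Lemma collinear_merge N D (xs : 'I_D -> qubit F) k k' :
  (0 < N)%N -> k != k' -> xs k != 0 -> cross (xs k) (xs k') = 0 ->
  exists2 ys : 'I_D -> qubit F, ys k' = 0 & tsum ys N = tsum xs N.
Proof.
move=> N_gt0 neq_kk' nz_xk /(cross_eq0_scale nz_xk) [c xk'E].
pose r := N.-root (1 + c ^+ N).
exists (fun i => if i == k then r *: xs k else if i == k' then 0 else xs i).
  by rewrite eq_sym (negbTE neq_kk') eqxx.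
apply/ffunP => s; rewrite /tsum !sum_ffunE (bigD1 k) // [RHS](bigD1 k) //=.
rewrite (bigD1 k') 1?eq_sym //= [X in _ = _ + X](bigD1 k') 1?eq_sym //=.
rewrite (eq_bigr (fun i => tpow (xs i) N s)) => [|i /andP [/negbTE -> /negbTE ->] //].
rewrite eqxx (negbTE neq_kk') eqxx tpow0 // xk'E !tpowZ rootCK // !ffunE.
by ring.
Qed.

Lemma optimal_decomp_neq0 N D (xs : 'I_D -> qubit F) :
  (0 < N)%N -> tsum xs N <> 0 -> optimal_bond_dim (tsum xs N) D ->
  forall k, xs k != 0.
Proof.
move=> N_gt0 psi_neq0 [_ [_ opt]] k; apply/negP => /eqP xk0.
case: D xs k psi_neq0 opt xk0 => [|D] xs k; first by case: k.
move=> psi_neq0 opt xk0; rewrite (tsum_drop0 N_gt0 xk0) in psi_neq0 opt.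
case: D xs k psi_neq0 opt {xk0} => [|D] xs k psi_neq0 opt.
  by apply: psi_neq0; rewrite /tsum big_ord0.
by have := opt D.+1 isT (ex_intro _ _ erefl); rewrite ltnn.
Qed.

Lemma optimal_decomp_cross_neq0 N D (xs : 'I_D -> qubit F) :
  (0 < N)%N -> tsum xs N <> 0 -> optimal_bond_dim (tsum xs N) D ->
  forall k k', k != k' -> cross (xs k) (xs k') != 0.
Proof.
move=> N_gt0 psi_neq0 opt k k' neq_kk'; apply/negP => /eqP coll.
have nz_xs := optimal_decomp_neq0 N_gt0 psi_neq0 opt.
have [ys ys0 e] := collinear_merge N_gt0 neq_kk' (nz_xs k) coll.
rewrite -e in psi_neq0 opt.
by have := optimal_decomp_neq0 N_gt0 psi_neq0 opt k'; rewrite ys0 eqxx.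
Qed.

End QubitPowers.

Theorem theorem2 (F : numClosedFieldType) (N D : nat) (xs : 'I_D -> qubit F) :
  (1 <= N)%N ->
  in_Sym (tsum xs N) ->
  tsum xs N <> 0 ->
  optimal_bond_dim (tsum xs N) D ->
  (D <= N./2 + 1)%N ->
  tsum xs N.+1 <> 0 /\ optimal_bond_dim (tsum xs N.+1) D.
Proof.
move=> N_gt0 _ psi_neq0 opt le_D_half.
have nz_xs := optimal_decomp_neq0 N_gt0 psi_neq0 opt.
have ncol := optimal_decomp_cross_neq0 N_gt0 psi_neq0 opt.
have [D_gt0 _] := opt.
have lb D' (ys : 'I_D' -> qubit F) :
    tsum xs N.+1 = tsum ys N.+1 -> (D' < D)%N -> (D <= D')%N.
  by move=> e lt_D'D; apply: (decomp_length_lb nz_xs ncol _ e); lia.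
split=> [psi'0 | ].
  have e : tsum xs N.+1 = tsum (fun _ : 'I_0 => 0) N.+1.
    by rewrite psi'0 /tsum big_ord0.
  by have := lb _ _ e D_gt0; rewrite leqNgt D_gt0.
split=> //; split; first by exists xs.
move=> D' _ [ys e]; case: (ltnP D' D) => // lt_D'D.
by have := lb _ _ e lt_D'D; rewrite leqNgt lt_D'D.
Qed.
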